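(* Let $\Lambda=(W_j,\Lambda_j,v_j)_{j\in\mathbb{J}}$ be a g-fusion frame for $H$ with g-fusion frame operator $S_\Lambda$, and let $\tilde W_j:=S_\Lambda^{-1}W_j$ and $\tilde{\Lambda}_j:=\Lambda_j\pi_{W_j}S_\Lambda^{-1}$. Let $\mathbb{I}$ be a finite subset of $\mathbb{J}$, $\mathbb{I}^c=\mathbb{J}\setminus\mathbb{I}$, and for $\mathbb{K}\subseteq\mathbb{J}$ define $S_{\mathbb{K}}f:=\sum_{j\in\mathbb{K}}v_j^2\pi_{W_j}\Lambda_j^*\tilde{\Lambda}_j\pi_{\tilde W_j}f$ ($f\in H$). Then for every $f\in H$, $$\sum_{j\in\mathbb{I}}v_j^2\langle \tilde{\Lambda}_j \pi_{\tilde{W}_j}f,\Lambda_j \pi_{W_j}f\rangle-\Vert S_{\mathbb{I}}f\Vert^2 =\sum_{j\in\mathbb{I}^c}v_j^2\overline{\langle \tilde{\Lambda}_j \pi_{\tilde{W}_j}f,\Lambda_j \pi_{W_j}f\rangle}-\Vert S_{\mathbb{I}^c}f\Vert^2.$$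
   Context: $H$ is a separable Hilbert space, $\mathbb{J}\subseteq\mathbb{Z}$, $\{H_j\}_{j\in\mathbb{J}}$ are separable Hilbert spaces, $\Lambda_j\in\mathcal{B}(H,H_j)$, $W_j$ are closed subspaces of $H$, $v_j>0$, and $\pi_V$ denotes the orthogonal projection onto a closed subspace $V$. The triple $\Lambda=(W_j,\Lambda_j,v_j)$ is a g-fusion frame for $H$ if there exist $0<A\le B<\infty$ with $A\Vert f\Vert^2\le\sum_{j\in\mathbb{J}}v_j^2\Vert\Lambda_j\pi_{W_j}f\Vert^2\le B\Vert f\Vert^2$ for all $f\in H$. Its g-fusion frame operator is $S_\Lambda f=\sum_{j\in\mathbb{J}}v_j^2\pi_{W_j}\Lambda_j^*\Lambda_j\pi_{W_j}f$, which is bounded, positive and invertible. The triple $(S_\Lambda^{-1}W_j,\Lambda_j\pi_{W_j}S_\Lambda^{-1},v_j)$ is the canonical dual g-fusion frame. *)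

From HB Require Import structures.
From mathcomp Require Import all_boot all_order all_algebra finmap.
From mathcomp Require Import all_classical all_reals all_analysis.
From mathcomp Require Import complex.
Import Order.TTheory GRing.Theory Num.Theory.
Import numFieldNormedType.Exports.

Set Implicit Arguments.
Unset Strict Implicit.
Unset Printing Implicit Defensive.

Local Open Scope classical_set_scope.
Local Open Scope ring_scope.

(* The filter of all finite subsets of I, directed by inclusion:
   used to express unconditional summation sum_{j in J} a_j. *)
Definition totally {I : choiceType} : set_system {fset I} :=
  filter_from setT (fun A => [set B | (A `<=` B)%fset]).

Definition partial_sum {I : choiceType} {V : zmodType}
  (x : I -> V) (A : {fset I}) : V := \sum_(i : A) x (val i).

Definition has_sum {K : numFieldType} {V : normedModType K}
  (J : set int) (a : int -> V) (s : V) : Prop :=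
  partial_sum (fun j => if `[< J j >] then a j else 0) @ totally --> s.

Definition sumJ {K : numFieldType} {V : normedModType K}
  (J : set int) (a : int -> V) : V :=
  lim (partial_sum (fun j => if `[< J j >] then a j else 0) @ totally).

Section Hilbert.
Variable R : realType.
Local Notation C := R[i].

Definition inner_product {V : normedModType C} (ip : V -> V -> C) : Prop :=
  [/\ forall a x1 x2 y, ip (a *: x1 + x2) y = a * ip x1 y + ip x2 y,
      forall x y, ip y x = (ip x y)^* &
      forall x, ip x x = `|x| ^+ 2].

Definition separable {V : normedModType C} : Prop :=
  exists u : nat -> V, closure (range u) = setT.

Definition closed_subspace {V : normedModType C} (W : set V) : Prop :=
  [/\ W 0, forall x y, W x -> W y -> W (x + y),
      forall (a : C) x, W x -> W (a *: x) & closed W].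

Definition bounded_linear {U V : normedModType C} (T : U -> V) : Prop :=
  linear T /\ continuous T.

Definition is_adjoint {U V : normedModType C} (ipU : U -> U -> C)
  (ipV : V -> V -> C) (T : U -> V) (Tstar : V -> U) : Prop :=
  forall x y, ipV (T x) y = ipU x (Tstar y).

Definition is_orth_proj {V : normedModType C} (ip : V -> V -> C)
  (W : set V) (P : V -> V) : Prop :=
  forall x, W (P x) /\ forall y, W y -> ip (x - P x) y = 0.

Local Open Scope complex_scope.

(* The g-fusion frame condition for (W_j, Lambda_j, v_j)_{j in J}, with
   P j the orthogonal projection onto W j:
   A |f|^2 <= sum_{j in J} v_j^2 |Lambda_j pi_{W_j} f|^2 <= B |f|^2. *)
Definition gfusion_frame_bounds {H : normedModType C} {Hj : int -> normedModType C}
  (J : set int) (P : int -> H -> H) (Lam : forall j, H -> Hj j) (v : int -> R)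
  (A B : R) : Prop :=
  [/\ 0 < A, A <= B &
    forall f : H, exists2 s : C,
      has_sum (V := C^o) J (fun j => ((v j) ^+ 2)%:C * `|Lam j (P j f)| ^+ 2) s &
      (A%:C * `|f| ^+ 2 <= s) && (s <= B%:C * `|f| ^+ 2)].

Definition gfusion_frame_op {H : normedModType C} {Hj : int -> normedModType C}
  (J : set int) (P : int -> H -> H) (Lam : forall j, H -> Hj j)
  (Lamstar : forall j, Hj j -> H) (v : int -> R) (f : H) : H :=
  sumJ J (fun j => ((v j) ^+ 2)%:C *: P j (Lamstar j (Lam j (P j f)))).

(* S_K f = sum_{j in K} v_j^2 pi_{W_j} Lambda_j^* Lt_j Pt_j f,
   with Lt_j = tilde Lambda_j and Pt_j = pi_{tilde W_j} *)
Definition S_K {H : normedModType C} {Hj : int -> normedModType C}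
  (K : set int) (P : int -> H -> H) (Lamstar : forall j, Hj j -> H)
  (Lt : forall j, H -> Hj j) (Pt : int -> H -> H) (v : int -> R) (f : H) : H :=
  sumJ K (fun j => ((v j) ^+ 2)%:C *: P j (Lamstar j (Lt j (Pt j f)))).

End Hilbert.

(* Put g := S^-1 f.  Since S, hence S^-1, is self-adjoint, pi_{W_j} S^-1 pi_{S^-1 W_j}
   = pi_{W_j} S^-1, so the j-th term of S_K f is the j-th term
   T_j g = v_j^2 pi_{W_j} Lambda_j^* Lambda_j pi_{W_j} g of the series of S g = f, and the
   j-th scalar of the statement is <T_j g, f>.  With X := S_I f we thus get
   S_{I^c} f = f - X, and both sides equal <X, f> - |X|^2, because
   <f, f - X> - |f - X|^2 = <X, f> - |X|^2.
   The analytic point is that the series defining S converges: by AM-GM and the upper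
   frame bound, |sum_{j in D} T_j a|^2 <= B sum_{j in D} v_j^2 |Lambda_j pi_{W_j} a|^2
   for finite D, so the partial sums are Cauchy in the complete space H. *)

From HB Require Import structures.
From mathcomp Require Import all_boot all_order all_algebra finmap.
From mathcomp Require Import all_classical all_reals all_analysis.
From mathcomp Require Import complex.
From mathcomp.algebra_tactics Require Import ring.
Import Order.TTheory GRing.Theory Num.Theory.
Import numFieldNormedType.Exports.

Local Open Scope classical_set_scope.
Local Open Scope ring_scope.

Lemma totally_filter (I : choiceType) : ProperFilter (@totally I).
Proof.
apply: filter_from_proper => [|A _]; last by exists A => /=.
apply: filter_from_filter; first by exists fset0.
move=> A B _ _; exists (A `|` B)%fset => // X /= ABX.
by split; apply: fsubset_trans ABX; [exact: fsubsetUl | exact: fsubsetUr].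
Qed.
#[global] Existing Instance totally_filter.

Section PartialSum.
Context {I : choiceType} {V : zmodType}.
Implicit Types (x : I -> V) (A B : {fset I}).

Lemma partial_sumE x A : partial_sum x A = \sum_(i <- A) x i.
Proof. by rewrite big_seq_fsetE. Qed.

Lemma partial_sum_split x {A B} : (A `<=` B)%fset ->
  partial_sum x B = partial_sum x A + partial_sum x (B `\` A)%fset.
Proof.
move=> AB; rewrite !partial_sumE (big_fsetID _ (mem A)) /=.
congr (_ + _); apply: eq_fbigl => i; rewrite !inE /=; last by rewrite andbC.
by apply/andP/idP => [[]//|iA]; split=> //; exact: (fsubsetP AB).
Qed.

Lemma partial_sum_additive {W : zmodType} (f : V -> W) x A :
  {morph f : u v / u + v} -> f (partial_sum x A) = partial_sum (fun i => f (x i)) A.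
Proof.
move=> fD; have f0 : f 0 = 0 by apply: (addrI (f 0)); rewrite -fD !addr0.
exact: big_morph.
Qed.

End PartialSum.

Lemma partial_sum_le_lim {K : numFieldType} {I : choiceType} (x : I -> K^o)
    (s : K^o) (D : {fset I}) :
  (forall i, 0 <= x i :> K) -> s \is Num.real ->
  partial_sum x @ totally --> s -> partial_sum x D <= s.
Proof.
move=> x_ge0 s_real xs.
have ps_ge0 (E : {fset I}) : 0 <= partial_sum x E :> K by exact: sumr_ge0.
have [//|sD] := real_leP (ger0_real (ps_ge0 D)) s_real.
have e_gt0 : 0 < partial_sum x D - s by rewrite subr_gt0.
have /cvgrPdist_lt/(_ _ e_gt0)[A0 _ nearA0] := xs.
have := nearA0 (A0 `|` D)%fset (fsubsetUl _ _).
rewrite (partial_sum_split _ (fsubsetUr A0 D)) distrC ger0_norm; last first.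
  by rewrite addrAC addr_ge0 // ltW.
by rewrite addrAC gtrDl => /(le_lt_trans (ps_ge0 _)); rewrite ltxx.
Qed.

Lemma partial_sum_cvg_dominated {K : numFieldType} {V : completeNormedModType K}
    {I : choiceType} (x : I -> V) (n : I -> K^o) (s : K^o) (c : K) :
  0 < c -> partial_sum n @ totally --> s ->
  (forall D, `|partial_sum x D| ^+ 2 <= c * partial_sum n D) ->
  cvg (partial_sum x @ totally).
Proof.
move=> c_gt0 ns x_dom; apply/cauchy_cvgP/cauchy_ballP => e e_gt0.
have e2_gt0 : 0 < e / 2 by rewrite divr_gt0.
have d_gt0 : 0 < (e / 2) ^+ 2 / c / 2 by rewrite !divr_gt0 // exprn_gt0.
have /cvgrPdist_lt/(_ _ d_gt0)[A0 _ nearA0] := ns.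
have tail_small D : (A0 `<=` D)%fset -> ball (partial_sum x A0) (e / 2) (partial_sum x D).
  move=> A0D; rewrite -ball_normE /= (partial_sum_split _ A0D) opprD addNKr normrN.
  have := x_dom (D `\` A0)%fset.
  set t := partial_sum n _ => x_le; have t_ge0 : 0 <= t.
    by rewrite -(pmulr_rge0 _ c_gt0) (le_trans _ x_le) // exprn_ge0.
  have t_small : t < (e / 2) ^+ 2 / c.
    rewrite -(ger0_norm t_ge0).
    have -> : t = (s - partial_sum n A0) - (s - partial_sum n D).
      by rewrite /t [partial_sum n D](partial_sum_split _ A0D); ring.
    rewrite [X in _ < X]splitr; apply: le_lt_trans (ler_normB _ _) _.
    by apply: ltrD; [exact: (nearA0 _ (fsubset_refl A0)) | exact: nearA0].
  rewrite -(@ltr_pXn2r _ 2) ?nnegrE ?(ltW e2_gt0) //.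
  by rewrite (le_lt_trans x_le) // -ltr_pdivlMl // mulrC.
have near_A0 : \forall y \near partial_sum x @ totally, ball (partial_sum x A0) (e / 2) y.
  by exists A0 => // B /tail_small.
near=> y z; apply: (@ball_splitr _ _ (partial_sum x A0)); [near: y | near: z];
  exact: near_A0.
Unshelve. all: by end_near.
Qed.

Section HasSum.
Context {K : numFieldType} {V W : normedModType K}.
Implicit Types (J I : set int) (a : int -> V).

Lemma has_sum_sumJ {J a s} : has_sum J a s -> sumJ J a = s.
Proof. exact: cvg_lim. Qed.

Lemma has_sum_additive {J a s} (f : V -> W) :
  {morph f : u v / u + v} -> {for s, continuous f} ->
  has_sum J a s -> has_sum J (fun j => f (a j)) (f s).
Proof.
move=> fD f_cont a_s; have f0 : f 0 = 0 by apply: (addrI (f 0)); rewrite -fD !addr0.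
apply: cvg_trans (cvg_comp _ _ a_s f_cont); apply: near_eq_cvg; near=> D => /=.
by rewrite partial_sum_additive //; congr partial_sum; apply: funext => j; case: ifP.
Unshelve. all: by end_near.
Qed.

Lemma has_sum_setD {J I a s t} : I `<=` J ->
  has_sum J a s -> has_sum I a t -> has_sum (J `\` I) a (s - t).
Proof.
move=> IJ a_s a_t; apply: cvg_trans (cvgB a_s a_t); apply: near_eq_cvg; near=> D => /=.
rewrite fctE /partial_sum -sumrB; apply: eq_bigr => -[j _] _ /=.
have [Ij|nIj] := asboolP (I j).
  by rewrite (asboolT (IJ _ Ij)) asboolF ?subrr // => -[].
rewrite subr0; case: asboolP => [Jj|nJj].
  by rewrite asboolT.
by rewrite asboolF // => -[].
Unshelve. all: by end_near.
Qed.

Lemma has_sum_finite {I} a : finite_set I -> has_sum I a (sumJ I a).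
Proof.
move=> /finite_fsetP[F ->]; pose b j := if `[< [set` F] j >] then a j else 0.
suff b_F : has_sum [set` F] a (partial_sum b F) by rewrite (has_sum_sumJ b_F).
apply: cvg_near_cst; exists F => // D FD.
rewrite (partial_sum_split _ FD) [X in _ + X]big1 ?addr0 // => i _.
have /[!inE] /andP[iF _] := fsvalP i.
by rewrite /b asboolF //; apply/negP.
Qed.

End HasSum.

Lemma continuous_additive_bounded {K : numFieldType} {U V : normedModType K}
    (g : U -> V) (c : K) :
  0 <= c -> {morph g : x y / x - y} -> (forall x, `|g x| <= `|x| * c) -> continuous g.
Proof.
move=> c_ge0 gB g_le s; apply/cvgrPdist_lt => e e_gt0.
have c1_gt0 : 0 < c + 1 by rewrite ltr_wpDl.
near=> x; rewrite -gB (le_lt_trans (g_le _)) //.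
have : `|s - x| < e / (c + 1).
  by near: x; apply: cvgr_dist_lt; [exact: cvg_id | rewrite divr_gt0].
rewrite ltr_pdivlMr // => /(le_lt_trans _); apply.
by rewrite ler_wpM2l // lerDl.
Unshelve. all: by end_near.
Qed.

Section InnerProduct.
Context {R : realType}.
Local Notation C := R[i].
Context {V : normedModType C} {ip : V -> V -> C}.
Hypothesis ip_inner : inner_product ip.

Lemma ipDl x1 x2 y : ip (x1 + x2) y = ip x1 y + ip x2 y.
Proof. by case: ip_inner => + _ _ => /(_ 1 x1 x2 y); rewrite scale1r mul1r. Qed.

Lemma ip0l y : ip 0 y = 0.
Proof. by apply: (addrI (ip 0 y)); rewrite -ipDl !addr0. Qed.

Lemma ipZl a x y : ip (a *: x) y = a * ip x y.
Proof. by case: ip_inner => + _ _ => /(_ a x 0 y); rewrite !addr0 ip0l addr0. Qed.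

Lemma ipNl x y : ip (- x) y = - ip x y.
Proof. by rewrite -scaleN1r ipZl mulN1r. Qed.

Lemma ipBl x1 x2 y : ip (x1 - x2) y = ip x1 y - ip x2 y.
Proof. by rewrite ipDl ipNl. Qed.

Lemma ipC x y : ip y x = (ip x y)^*.
Proof. by case: ip_inner. Qed.

Lemma ipxx x : ip x x = `|x| ^+ 2.
Proof. by case: ip_inner. Qed.

Lemma ipDr x y1 y2 : ip x (y1 + y2) = ip x y1 + ip x y2.
Proof. by rewrite ipC ipDl rmorphD /= -!ipC. Qed.

Lemma ipZr x a y : ip x (a *: y) = a^* * ip x y.
Proof. by rewrite ipC ipZl rmorphM /= -ipC. Qed.

Lemma ipBr x y1 y2 : ip x (y1 - y2) = ip x y1 - ip x y2.
Proof. by rewrite ipC ipBl rmorphB /= -!ipC. Qed.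

Lemma ip0r x : ip x 0 = 0.
Proof. by rewrite ipC ip0l conjC0. Qed.

Lemma ipxx_eq0 x : (ip x x == 0) = (x == 0).
Proof. by rewrite ipxx sqrf_eq0 normr_eq0. Qed.

Lemma norm_ip_le x y : `|ip x y| <= `|x| * `|y|.
Proof.
have [->|y_neq0] := eqVneq y 0; first by rewrite ip0r !normr0 mulr0.
have yy_gt0 : 0 < ip y y by rewrite ipxx exprn_gt0 // normr_gt0.
pose z := x - (ip x y / ip y y) *: y.
have : 0 <= ip z z by rewrite ipxx exprn_ge0.
have yy_real : (ip y y)^* = ip y y by rewrite -ipC.
rewrite /z ipBl !ipBr !ipZl !ipZr (ipC x y) rmorphM fmorphV /= yy_real.
set c := ip x y; set n := ip y y.
have -> : ip x x - c^* / n * c - (c / n * c^* - c / n * (c^* / n * n)) =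
    ip x x - c * c^* / n by field; rewrite gt_eqF.
rewrite subr_ge0 ler_pdivrMr // -normCK /n !ipxx -exprMn => le_sq.
by rewrite -(@ler_pXn2r _ 2) // nnegrE ?mulr_ge0.
Qed.

Lemma ipl_continuous y : continuous (ip ^~ y : V -> C^o).
Proof.
by apply: (continuous_additive_bounded _ `|y|) => // [x1 x2 | x];
  [exact: ipBl | exact: norm_ip_le].
Qed.

Lemma ipr_continuous x : continuous (ip x : V -> C^o).
Proof.
apply: (continuous_additive_bounded _ `|x|) => // [y1 y2 | y]; first exact: ipBr.
by rewrite ipC norm_conjC norm_ip_le.
Qed.

Lemma orth_proj_sym {W : set V} {P : V -> V} : is_orth_proj ip W P ->
  forall x y, ip (P x) y = ip x (P y).
Proof.
move=> P_orth x y.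
have /eqP : ip (P x) (y - P y) = 0.
  by rewrite ipC (P_orth y).2 ?conjC0 //; exact: (P_orth x).1.
rewrite ipBr subr_eq0 => /eqP ->.
have /eqP : ip (x - P x) (P y) = 0 by rewrite (P_orth x).2 //; exact: (P_orth y).1.
by rewrite ipBl subr_eq0 => /eqP ->.
Qed.

Lemma has_sum_ipl {J} {a : int -> V} {s} y :
  has_sum J a s -> has_sum (V := C^o) J (fun j => ip (a j) y) (ip s y).
Proof.
apply: (has_sum_additive (ip ^~ y : V -> C^o)); last exact: ipl_continuous.
by move=> x1 x2; rewrite /= ipDl.
Qed.

Lemma has_sum_ipr {J} {a : int -> V} {s} x :
  has_sum J a s -> has_sum (V := C^o) J (fun j => ip x (a j)) (ip x s).
Proof.
apply: (has_sum_additive (ip x : V -> C^o)); last exact: ipr_continuous.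
by move=> y1 y2; rewrite /= ipDr.
Qed.

End InnerProduct.

Section GFusionFrame.
Local Open Scope complex_scope.
Context {R : realType}.
Local Notation C := R[i].
Context {H : completeNormedModType C} {ip : H -> H -> C}.
Hypothesis ip_inner : inner_product ip.
Context {J : set int} {Hj : int -> normedModType C}.
Context {ipj : forall j, Hj j -> Hj j -> C}.
Hypothesis ipj_inner : forall j, inner_product (ipj j).
Context {W : int -> set H} {P : int -> H -> H}.
Hypothesis P_orth : forall j, is_orth_proj ip (W j) (P j).
Context {Lam : forall j, H -> Hj j} {Lamstar : forall j, Hj j -> H}.
Hypothesis Lam_adj : forall j, is_adjoint ip (ipj j) (Lam j) (Lamstar j).
Context {v : int -> R} {A B : R}.
Hypothesis frame : gfusion_frame_bounds J P Lam v A B.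

Local Notation S := (gfusion_frame_op J P Lam Lamstar v).
Local Notation restrictJ x := (fun j => if `[< J j >] then x j else 0).

Definition frame_term (a : H) j : H :=
  ((v j) ^+ 2)%:C *: P j (Lamstar j (Lam j (P j a))).

Definition frame_energy (a : H) j : C^o := ((v j) ^+ 2)%:C * `|Lam j (P j a)| ^+ 2.

Lemma weight_ge0 j : 0 <= ((v j) ^+ 2)%:C.
Proof. by rewrite ler0c sqr_ge0. Qed.

Lemma upper_bound_gt0 : 0 < B%:C.
Proof. by case: frame => A_gt0 AB _; rewrite ltcR (lt_le_trans A_gt0 AB). Qed.

Lemma ipl_frame_term a b j :
  ip (frame_term a j) b = ((v j) ^+ 2)%:C * ipj j (Lam j (P j a)) (Lam j (P j b)).
Proof.
rewrite (ipZl ip_inner) (orth_proj_sym ip_inner (P_orth j)).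
by rewrite (ipC ip_inner (P j b)) -Lam_adj -(ipC (ipj_inner j)).
Qed.

Lemma ipr_frame_term a b j :
  ip a (frame_term b j) = ((v j) ^+ 2)%:C * ipj j (Lam j (P j a)) (Lam j (P j b)).
Proof.
rewrite (ipC ip_inner) ipl_frame_term rmorphM /= -(ipC (ipj_inner j)).
by rewrite conj_Creal // ger0_real // weight_ge0.
Qed.

Lemma frame_energy_partial_le a D :
  partial_sum (restrictJ (frame_energy a)) D <= B%:C * `|a| ^+ 2.
Proof.
case: frame => A_gt0 _ /(_ a)[s energy_s /andP[As sB]].
apply: le_trans sB; apply: partial_sum_le_lim energy_s => [j|].
  by case: ifP => // _; rewrite mulr_ge0 ?weight_ge0 ?exprn_ge0.
apply: ger0_real; apply: le_trans As.
by rewrite mulr_ge0 ?exprn_ge0 // ler0c ltW.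
Qed.

Lemma norm_frame_partial_sum a D :
  `|partial_sum (restrictJ (frame_term a)) D| ^+ 2 <=
  B%:C * partial_sum (restrictJ (frame_energy a)) D.
Proof.
set x := partial_sum _ D; have B_gt0 := upper_bound_gt0.
set Ea := partial_sum _ D; set Ex := partial_sum (restrictJ (frame_energy x)) D.
pose cross j := ((v j) ^+ 2)%:C * (`|Lam j (P j a)| * `|Lam j (P j x)|).
have x_le_cross : `|x| ^+ 2 <= partial_sum (restrictJ cross) D.
  have -> : `|x| ^+ 2 = `|ip x x| by rewrite ipxx // ger0_norm // exprn_ge0.
  rewrite {1}/x (partial_sum_additive (ip ^~ x)); last by move=> ? ?; exact: ipDl.
  apply: le_trans (ler_norm_sum _ _ _) _; apply: ler_sum => j _.
  case: ifP => _; last by rewrite ip0l // normr0.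
  rewrite ipl_frame_term normrM ger0_norm ?weight_ge0 // ler_wpM2l ?weight_ge0 //.
  exact: norm_ip_le.
have cross_le : partial_sum (restrictJ cross) D * B%:C *+ 2 <= B%:C ^+ 2 * Ea + Ex.
  rewrite /Ea /Ex !partial_sumE mulr_suml -sumrMnl mulr_sumr -big_split /=.
  apply: ler_sum => j _; case: ifP => _; last by rewrite !mulr0 mul0r addr0 mul0rn.
  have amgm := (real_leif_mean_square_scaled
    (rpredM (gtr0_real B_gt0) (normr_real (Lam j (P j a)))) (normr_real (Lam j (P j x)))).1.
  have := ler_wpM2l (weight_ge0 j) amgm.
  by rewrite /cross /frame_energy; congr (_ <= _); ring.
have : `|x| ^+ 2 * B%:C *+ 2 <= B%:C ^+ 2 * Ea + B%:C * `|x| ^+ 2.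
  apply: le_trans (lerD (lexx _) (frame_energy_partial_le x D)).
  by apply: le_trans cross_le; rewrite lerMn2r /= ler_pM2r.
by rewrite mulr2n [B%:C * _]mulrC lerD2r [B%:C ^+ 2]expr2 [B%:C * B%:C * _]mulrAC ler_pM2r.
Qed.

Lemma has_sum_frame_op a : has_sum J (frame_term a) (S a).
Proof.
case: frame => _ _ /(_ a)[s energy_s _].
exact: partial_sum_cvg_dominated upper_bound_gt0 energy_s (norm_frame_partial_sum a).
Qed.

Lemma frame_op_sym a b : ip (S a) b = ip a (S b).
Proof.
have := has_sum_ipl ip_inner b (has_sum_frame_op a).
have -> : (fun j => ip (frame_term a j) b) = (fun j => ip a (frame_term b j)).
  by apply: funext => j; rewrite ipl_frame_term ipr_frame_term.
move=> /has_sum_sumJ <-; exact: has_sum_sumJ (has_sum_ipr ip_inner a (has_sum_frame_op b)).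
Qed.

Context {Sinv : H -> H}.
Hypothesis SinvK : cancel Sinv S.

Lemma inv_frame_op_sym a b : ip (Sinv a) b = ip a (Sinv b).
Proof. by rewrite -{1}[b]SinvK -frame_op_sym SinvK. Qed.

Context {Pt : int -> H -> H}.
Hypothesis Pt_orth : forall j, is_orth_proj ip (Sinv @` W j) (Pt j).

Lemma proj_inv_frame_op_proj j a : P j (Sinv (Pt j a)) = P j (Sinv a).
Proof.
apply/eqP; rewrite -subr_eq0 -(ipxx_eq0 ip_inner); set d := _ - _.
rewrite {1}/d (ipBl ip_inner) !(orth_proj_sym ip_inner (P_orth j)) !inv_frame_op_sym.
rewrite -(ipBl ip_inner) -opprB (ipNl ip_inner) (Pt_orth j a).2 ?oppr0 //.
by exists (P j d); [exact: (P_orth j d).1 | ].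
Qed.

End GFusionFrame.
Arguments frame_term {R H Hj} P Lam Lamstar v a j.

Local Open Scope complex_scope.

Theorem theorem3p2
  (R : realType)
  (H : completeNormedModType R[i]) (ip : H -> H -> R[i])
  (hip : inner_product ip) (hsep : separable (V := H))
  (J : set int)
  (Hj : int -> completeNormedModType R[i])
  (ipj : forall j, Hj j -> Hj j -> R[i])
  (hipj : forall j, inner_product (ipj j))
  (hsepj : forall j, separable (V := Hj j))
  (W : int -> set H) (hW : forall j, closed_subspace (W j))
  (P : int -> H -> H) (hP : forall j, is_orth_proj ip (W j) (P j))
  (Lam : forall j, H -> Hj j) (hLam : forall j, bounded_linear (Lam j))
  (Lamstar : forall j, Hj j -> H)
  (hLamstar : forall j, is_adjoint ip (ipj j) (Lam j) (Lamstar j))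
  (v : int -> R) (hv : forall j, J j -> 0 < v j)
  (A B : R) (hframe : gfusion_frame_bounds J P Lam v A B)
  (Sinv : H -> H)
  (hSinv : cancel (gfusion_frame_op J P Lam Lamstar v) Sinv /\
           cancel Sinv (gfusion_frame_op J P Lam Lamstar v))
  (Pt : int -> H -> H) (hPt : forall j, is_orth_proj ip (Sinv @` W j) (Pt j))
  (I : set int) (hIfin : finite_set I) (hIJ : I `<=` J)
  (f : H) :
  let Lt := fun j (x : H) => Lam j (P j (Sinv x)) in
  let Ic := J `\` I in
  sumJ (V := R[i]^o) I
    (fun j => ((v j) ^+ 2)%:C * ipj j (Lt j (Pt j f)) (Lam j (P j f)))
  - `|S_K I P Lamstar Lt Pt v f| ^+ 2
  = sumJ (V := R[i]^o) Ic
    (fun j => ((v j) ^+ 2)%:C * (ipj j (Lt j (Pt j f)) (Lam j (P j f)))^*)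
  - `|S_K Ic P Lamstar Lt Pt v f| ^+ 2.
Proof.
move=> Lt Ic; pose T := frame_term P Lam Lamstar v (Sinv f).
have S_J : has_sum J T f.
  by have := has_sum_frame_op hip hipj hP hLamstar hframe (Sinv f); rewrite hSinv.2.
have LtPt j : Lt j (Pt j f) = Lam j (P j (Sinv f)).
  by rewrite /Lt (proj_inv_frame_op_proj hip hipj hP hLamstar hframe hSinv.2 hPt).
have S_KE K : S_K K P Lamstar Lt Pt v f = sumJ K T.
  by rewrite /S_K; congr sumJ; apply: funext => j; rewrite LtPt.
have S_I := has_sum_finite T hIfin; set X := sumJ I T in S_I.
have S_Ic := has_sum_setD hIJ S_J S_I.
rewrite !S_KE -/X (has_sum_sumJ S_Ic).
have -> : sumJ (V := R[i]^o) I
    (fun j => ((v j) ^+ 2)%:C * ipj j (Lt j (Pt j f)) (Lam j (P j f))) = ip X f.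
  apply: has_sum_sumJ; have := has_sum_ipl hip f S_I; congr has_sum.
  by apply: funext => j; rewrite LtPt (ipl_frame_term hip hipj hP hLamstar).
have -> : sumJ (V := R[i]^o) Ic
    (fun j => ((v j) ^+ 2)%:C * (ipj j (Lt j (Pt j f)) (Lam j (P j f)))^*) = ip f (f - X).
  apply: has_sum_sumJ; have := has_sum_ipr hip f S_Ic; congr has_sum.
  apply: funext => j; rewrite LtPt (ipr_frame_term hip hipj hP hLamstar).
  by rewrite (ipC (hipj j)).
by rewrite -!(ipxx hip) !(ipBl hip) !(ipBr hip); ring.
Qed.
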